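(* Let $C_5 \rtimes_4 C_2$ be the group generated by $x, y$ with relations $x^2 = 1$, $y^5 = 1$, $yx = xy^4$, and let $H = \langle y \rangle$. Let $S$ be a sequence in $C_5 \rtimes_4 C_2$ with $|S| = 5$ that is free of product-$1$ subsequences. Then $S$ contains at least one element of $H$.
   Context: A sequence in a finite group $G$ is a finite list of elements of $G$, repetition allowed. A non-empty subsequence $(g_{n_1},\dots,g_{n_k})$ is a product-$1$ subsequence if $g_{\sigma(n_1)}\cdots g_{\sigma(n_k)} = 1$ for some permutation $\sigma$ of $\{n_1,\dots,n_k\}$; $S$ is free of product-$1$ subsequences if it has no such subsequence. *)

From mathcomp Require Import all_boot all_fingroup.
Set Implicit Arguments.
Unset Strict Implicit.
Unset Printing Implicit Defensive.
Local Open Scope group_scope.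

(* A subsequence of S is selected by a bit mask (subsequences are taken by
   positions, so repeated entries are handled correctly). *)
Definition product_one_subseq (gT : finGroupType) (S : seq gT) (m : bitseq) : Prop :=
  mask m S != [::] /\
  exists t : seq gT, perm_eq t (mask m S) /\ \prod_(g <- t) g = 1.

Definition product_one_free (gT : finGroupType) (S : seq gT) : Prop :=
  forall m : bitseq, ~ product_one_subseq S m.

From mathcomp Require Import all_boot all_fingroup.

Set Implicit Arguments.
Unset Strict Implicit.
Unset Printing Implicit Defensive.

Local Open Scope group_scope.

(* The elements of G outside H = <[y]> are the reflections x y^i, and they are
   involutions. Hence a product-one-free S avoiding H has no repeated entry, so
   its five entries are all five reflections; but (x)(x y^2)(x y)(x y^4)
   = y^2 y^3 = 1. *)

Section ProductOneFree.

Variables (gT : finGroupType) (S : seq gT).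
Hypothesis S_free : product_one_free S.

Lemma product_one_free_submultiset (T : seq gT) :
  (forall g, count_mem g T <= count_mem g S) -> \prod_(g <- T) g = 1 ->
  T = [::].
Proof.
move=> /count_maskP [m _ T_m] T1; have [//|T_nil] := eqVneq T [::].
case: (@S_free m); split; last by exists T.
by rewrite -size_eq0 -(perm_size T_m) size_eq0.
Qed.

Lemma product_one_free_uniq : {in S, forall g, g * g = 1} -> uniq S.
Proof.
move=> S_inv; apply: count_mem_uniq => g.
have [gS|gNS] := boolP (g \in S); last by apply/count_memPn.
apply/anti_leq/andP; split; last by rewrite -has_count has_pred1.
rewrite leqNgt; apply/negP => dup_g.
suff: [:: g; g] = [::] by [].
apply: product_one_free_submultiset; last by rewrite !big_cons big_nil mulg1 S_inv.
by move=> h /=; case: eqP => [<-|_]; rewrite ?addn0.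
Qed.

End ProductOneFree.

Section Reflections.

Variables (gT : finGroupType) (x y : gT).
Hypotheses (x2 : x ^+ 2 = 1) (yx : y * x = x * y^-1).

Lemma expg_mulx i : y ^+ i * x = x * y ^- i.
Proof.
elim: i => [|i IHi]; first by rewrite !expg0 invg1 mul1g mulg1.
by rewrite {1}expgS -mulgA IHi mulgA yx -mulgA -invMg -expgSr.
Qed.

Lemma mul_reflections i j : (x * y ^+ i) * (x * y ^+ (i + j)) = y ^+ j.
Proof.
by rewrite -mulgA (mulgA (y ^+ i)) expg_mulx !mulgA -expg2 x2 mul1g expgD mulKg.
Qed.

Lemma reflection_involutive i : (x * y ^+ i) * (x * y ^+ i) = 1.
Proof. by have := mul_reflections i 0; rewrite addn0. Qed.

Definition reflections n := mkseq (fun i => x * y ^+ i) n.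

Lemma mem_reflections n g : 0 < n -> y ^+ n = 1 ->
  g \in <<[set x; y]>> -> g \notin <[y]> -> g \in reflections n.
Proof.
move=> n_gt0 yn; have nyx : x \in 'N(<[y]>).
  by rewrite inE -cycleJ cycle_subG conjgE yx mulKg groupV cycle_id.
have G_xy : <<[set x; y]>> = <[x]> * <[y]>.
  rewrite -comm_joingE; last by apply: normC; rewrite cycle_subG.
  by rewrite joing_idl joing_idr.
rewrite G_xy => /imset2P [_ _ /cycleP [k ->] /cycleP [i ->] ->].
rewrite -(expg_mod k x2) -(expg_mod i yn).
have : k %% 2 < 2 by rewrite ltn_pmod.
case: (k %% 2) => [_|[_ _|//]]; first by rewrite expg0 mul1g mem_cycle.
by apply/map_f; rewrite mem_iota ltn_pmod.
Qed.

End Reflections.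

Theorem proposition1 (gT : finGroupType) (x y : gT) (S : seq gT) :
  x ^+ 2 = 1 -> y ^+ 5 = 1 -> y * x = x * y ^+ 4 ->
  #|<<[set x; y]>>| = 10 ->
  all (fun g => g \in <<[set x; y]>>) S ->
  size S = 5 ->
  product_one_free S ->
  exists2 g, g \in S & g \in <[y]>.
Proof.
move=> x2 y5 yx4 _ S_G size_S S_free.
have yx : y * x = x * y^-1.
  by rewrite yx4; congr (_ * _); apply/esym/eqP; rewrite eq_invg_mul -expgS y5.
have [/hasP//|/hasPn S_out] := boolP (has (mem <[y]>) S).
have S_R : {subset S <= reflections x y 5}.
  by move=> g gS; apply: mem_reflections => //; [apply: (allP S_G) | apply: S_out].
have S_uniq : uniq S.
  apply: product_one_free_uniq S_free _ => _ /S_R /mapP [i _ ->].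
  exact: reflection_involutive.
have size_R : size (reflections x y 5) <= size S by rewrite size_mkseq size_S.
have S_perm : perm_eq S (reflections x y 5).
  have [_ S_eq_R] := uniq_min_size S_uniq S_R size_R.
  exact: uniq_perm S_uniq (leq_size_uniq S_uniq S_R size_R) S_eq_R.
set T := [:: x * y ^+ 0; x * y ^+ 2; x * y ^+ 1; x * y ^+ 4].
have T_R : perm_eq T (mask [:: true; true; true; false; true] (reflections x y 5)).
  by rewrite perm_cons (perm_catCA [:: _] [:: _] [:: _]).
suff: T = [::] by [].
apply: (product_one_free_submultiset S_free).
  by move=> g; rewrite (seq.permP T_R) (seq.permP S_perm) leq_count_mask.
rewrite !big_cons big_nil mulgA.
have r0r2 : (x * y ^+ 0) * (x * y ^+ 2) = y ^+ 2 := mul_reflections x2 yx 0 2.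
have r1r4 : (x * y ^+ 1) * (x * y ^+ 4) = y ^+ 3 := mul_reflections x2 yx 1 3.
by rewrite r0r2 mulg1 r1r4 -expgD y5.
Qed.
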